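(* Let $\Lambda$ be a finitely aligned left cancellative small category, let $\alpha,\beta\in\Lambda$ with $s(\alpha)=s(\beta)$ and $\alpha\beta^*\in S_\Lambda^{\mathrm{Iso}}$, and write $\alpha\Lambda\cap\beta\Lambda=\bigcup_{i=1}^n\gamma_i\Lambda$ with $\gamma_i\in\Lambda$. Then $D_{\alpha\Lambda}=D_{\beta\Lambda}=\bigcup_{i=1}^nD_{\gamma_i\Lambda}$. Furthermore, if $\gamma\in\Lambda$ satisfies $\gamma\Lambda\cap\alpha\Lambda\neq\emptyset$ or $\gamma\Lambda\cap\beta\Lambda\neq\emptyset$, then there exists $1\le i\le n$ with $\gamma\Lambda\cap\gamma_i\Lambda\neq\emptyset$.
   Context: $\Lambda$ is a left cancellative small category (range $r$, source $s$), finitely aligned: each $\alpha\Lambda\cap\beta\Lambda$ is a finite union of sets $f\Lambda$, where $\alpha\Lambda=\{\alpha\beta:s(\alpha)=r(\beta)\}$. Each $\alpha$ is viewed as the partial bijection $s(\alpha)\Lambda\to\alpha\Lambda$, $\beta\mapsto\alpha\beta$, in the symmetric inverse monoid $\mathcal{I}(\Lambda)$, with inverse $\alpha^*$; $S_\Lambda$ is the inverse semigroup they generate. $S_\Lambda^{\mathrm{Iso}}=\{s\in S_\Lambda: ses^*e\neq0\text{ for all idempotents }0\neq e\leqslant s^*s\}$. The constructible sets are $\mathcal{J}(\Lambda)=\{X\subseteq\Lambda:\mathrm{Id}_X\in S_\Lambda\}$, a semilattice under intersection isomorphic to the idempotent semilattice of $S_\Lambda$ (e.g. $\alpha\Lambda\in\mathcal{J}(\Lambda)$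 since $\mathrm{Id}_{\alpha\Lambda}=\alpha\alpha^*$). Filters are nonempty proper subsets of $\mathcal{J}(\Lambda)$ (not containing $\emptyset$) closed under intersection and upward closed; tight filters are those in the closure of the maximal filters in $\{0,1\}^{\mathcal{J}(\Lambda)}$. For $X\in\mathcal{J}(\Lambda)$, $D_X=\{\xi\text{ tight filter}:X\in\xi\}$. *)

From Stdlib Require Import List.
Set Implicit Arguments.

(* A small category given by its morphism type, with a total composition
   function that is only constrained on composable pairs (s a = r b). *)
Record LCSC := {
  Obj : Type;
  Mor : Type;
  rng : Mor -> Obj;
  src : Mor -> Obj;
  comp : Mor -> Mor -> Mor;           (* comp a b = "a b" when src a = rng b *)
  idm : Obj -> Mor;
  rng_idm : forall v, rng (idm v) = v;
  src_idm : forall v, src (idm v) = v;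
  rng_comp : forall a b, src a = rng b -> rng (comp a b) = rng a;
  src_comp : forall a b, src a = rng b -> src (comp a b) = src b;
  comp_idl : forall a, comp (idm (rng a)) a = a;
  comp_idr : forall a, comp a (idm (src a)) = a;
  compA : forall a b c, src a = rng b -> src b = rng c ->
            comp a (comp b c) = comp (comp a b) c;
  left_cancel : forall a b c, src a = rng b -> src a = rng c ->
            comp a b = comp a c -> b = c
}.

Section Defs.
Variable C : LCSC.

Definition mset := Mor C -> Prop.

Definition Lam (a : Mor C) : mset :=
  fun x => exists b, src C a = rng C b /\ x = comp C a b.

Definition finitely_aligned : Prop :=
  forall a b : Mor C, exists l : list (Mor C),
    forall x, (Lam a x /\ Lam b x) <-> exists g, In g l /\ Lam g x.

(* partial maps on Lambda, as relations (graph: f x y means f(x) = y) *)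
Definition prel := Mor C -> Mor C -> Prop.

(* alpha as the partial bijection s(alpha)Lambda -> alpha Lambda *)
Definition morR (a : Mor C) : prel :=
  fun x y => rng C x = src C a /\ y = comp C a x.

(* compR f g = f o g (apply g first) *)
Definition compR (f g : prel) : prel := fun x z => exists y, g x y /\ f y z.
Definition invR (f : prel) : prel := fun x y => f y x.
Definition eqR (f g : prel) : Prop := forall x y, f x y <-> g x y.
Definition idR (X : mset) : prel := fun x y => X x /\ x = y.
Definition zeroR (f : prel) : Prop := forall x y, ~ f x y.

Inductive inS : prel -> Prop :=
| inS_gen : forall a, inS (morR a)
| inS_inv : forall f, inS f -> inS (invR f)
| inS_comp : forall f g, inS f -> inS g -> inS (compR f g)
| inS_ext : forall f g, inS f -> eqR f g -> inS g.

Definition isIdem (e : prel) : Prop := inS e /\ eqR (compR e e) e.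
Definition leR (e f : prel) : Prop := eqR e (compR e f).

Definition Iso (t : prel) : Prop :=
  inS t /\
  forall e, isIdem e -> ~ zeroR e -> leR e (compR (invR t) t) ->
    ~ zeroR (compR (compR (compR t e) (invR t)) e).

Definition J (X : mset) : Prop := inS (idR X).

Definition isFilter (xi : mset -> Prop) : Prop :=
  (exists X, xi X) /\
  (forall X, xi X -> J X) /\
  ~ (exists X, xi X /\ forall x, ~ X x) /\
  (forall X Y, xi X -> xi Y -> xi (fun x => X x /\ Y x)) /\
  (forall X Y, xi X -> J Y -> (forall x, X x -> Y x) -> xi Y).

Definition maxFilter (xi : mset -> Prop) : Prop :=
  isFilter xi /\
  forall eta, isFilter eta -> (forall X, xi X -> eta X) -> forall X, eta X -> xi X.

(* tight filter: a filter lying in the closure of the maximal filters in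
   {0,1}^J(Lambda) (product topology; closure unfolded via basic opens) *)
Definition tight (xi : mset -> Prop) : Prop :=
  isFilter xi /\
  forall (F G : list mset),
    (forall X, In X F -> xi X) ->
    (forall Y, In Y G -> J Y /\ ~ xi Y) ->
    exists eta, maxFilter eta /\ (forall X, In X F -> eta X) /\
                (forall Y, In Y G -> ~ eta Y).

Definition D (X : mset) : (mset -> Prop) -> Prop := fun xi => tight xi /\ xi X.

End Defs.

Arguments Lam {C} a _.
Arguments morR {C} a _ _.
Arguments compR {C} f g _ _.
Arguments invR {C} f _ _.
Arguments eqR {C} f g.
Arguments idR {C} X _ _.
Arguments zeroR {C} f.
Arguments inS {C} _.
Arguments isIdem {C} e.
Arguments leR {C} e f.
Arguments Iso {C} t.
Arguments J {C} X.
Arguments isFilter {C} xi.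
Arguments maxFilter {C} xi.
Arguments tight {C} xi.
Arguments D {C} X _.

(* Write t = alpha beta^*, which maps beta w to alpha w. If X is a nonempty
   constructible subset of beta Lambda, then Id_X <= t^* t, so the Iso
   condition gives t Id_X t^* Id_X <> 0, i.e. t X meets X; in particular X
   meets alpha Lambda. Pulling a subset of alpha Lambda back along t gives the
   symmetric statement. So every nonempty constructible subset of alpha Lambda
   (or beta Lambda) meets alpha Lambda /\ beta Lambda = U gamma_i Lambda.
   If a tight filter contained alpha Lambda but no gamma_i Lambda, tightness
   would give a maximal filter with the same property, and maximality a member
   X of it inside alpha Lambda disjoint from every gamma_i Lambda: a nonempty
   constructible subset of alpha Lambda missing beta Lambda. *)
From Stdlib Require Import List Classical.
Set Implicit Arguments.
Unset Strict Implicit.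

Section Constructible.
Variable C : LCSC.

Definition dense_in (Y X : mset C) : Prop :=
  forall Z, J Z -> (forall x, Z x -> X x) -> (exists z, Z z) -> exists z, Z z /\ Y z.

Lemma J_Lam (g : Mor C) : J (Lam g).
Proof.
  apply (inS_ext (inS_comp (inS_gen _ g) (inS_inv (inS_gen _ g)))).
  intros x z; unfold compR, invR, morR, idR, Lam; split.
  - intros [y [[Hy Hx] [Hz Hxz]]]; subst; split; [exists y|]; auto.
  - intros [[w [Hw Hx]] Hxz]; subst; exists w; auto.
Qed.

Lemma J_inter (X Y : mset C) : J X -> J Y -> J (fun x => X x /\ Y x).
Proof.
  intros HX HY; apply (inS_ext (inS_comp HX HY)).
  intros x z; unfold compR, idR; split.
  - intros [y [[HYx Hxy] [HXy Hyz]]]; subst; auto.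
  - intros [[HXz HYz] Hxz]; subst; exists z; auto.
Qed.

Lemma idR_isIdem (X : mset C) : J X -> isIdem (idR X).
Proof.
  intro HX; split; [exact HX|]; intros x y; unfold compR, idR; split.
  - intros [u [[Hx Hxu] [Hu Huy]]]; subst; auto.
  - intros [Hx Hxy]; subst; exists y; auto.
Qed.

Lemma idR_leR (X Y : mset C) (f : prel C) :
  eqR f (idR Y) -> (forall x, X x -> Y x) -> leR (idR X) f.
Proof.
  intros Hf HXY x y; unfold compR, idR; split.
  - intros [Hx Hxy]; subst; exists y; split; [apply Hf; split|]; auto.
  - intros [u [Hxu [Hu Huy]]]; apply Hf in Hxu as [_ Hxu]; subst; auto.
Qed.

Section Filters.
Variable xi : mset C -> Prop.
Hypothesis Hxi : isFilter xi.

Lemma isFilter_J (X : mset C) : xi X -> J X.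
Proof. apply Hxi. Qed.

Lemma isFilter_nonempty (X : mset C) : xi X -> exists x, X x.
Proof.
  intro HX; apply NNPP; intro Hempty; apply (proj1 (proj2 (proj2 Hxi))).
  exists X; split; auto; intros x Hx; apply Hempty; exists x; auto.
Qed.

Lemma isFilter_inter (X Y : mset C) : xi X -> xi Y -> xi (fun x => X x /\ Y x).
Proof. apply Hxi. Qed.

Lemma isFilter_up (X Y : mset C) : xi X -> J Y -> (forall x, X x -> Y x) -> xi Y.
Proof. apply Hxi. Qed.

End Filters.

(* Otherwise the sets containing some X /\ Y with X in eta form a proper
   filter strictly above eta. *)
Lemma maxFilter_disjoint (eta : mset C -> Prop) (Y : mset C) :
  maxFilter eta -> J Y -> ~ eta Y ->
  exists X, eta X /\ forall x, X x -> Y x -> False.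
Proof.
  intros [Heta Hmax] HY HnY; apply NNPP; intro Hmeets.
  set (eta' := fun Z => J Z /\ exists X, eta X /\ forall x, X x -> Y x -> Z x).
  assert (Heta' : isFilter eta').
  { destruct (proj1 Heta) as [X0 HX0].
    split; [|split; [|split; [|split]]].
    - exists Y; split; auto; exists X0; auto.
    - intros Z [HZ _]; exact HZ.
    - intros [Z [[_ [X [HX HXYZ]]] HZ]]; apply Hmeets; exists X; split; auto.
      intros x Hx Hy; exact (HZ x (HXYZ x Hx Hy)).
    - intros Z1 Z2 [HZ1 [X1 [HX1 H1]]] [HZ2 [X2 [HX2 H2]]]; split.
      + apply J_inter; auto.
      + exists (fun x => X1 x /\ X2 x); split; [apply isFilter_inter; auto|].
        intros x [Hx1 Hx2] Hy; auto.
    - intros Z1 Z2 [_ [X [HX H1]]] HZ2 H12; split; auto; exists X; auto. }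
  apply HnY, (Hmax eta' Heta').
  - intros X HX; split; [apply (isFilter_J Heta); auto|exists X; auto].
  - destruct (proj1 Heta) as [X0 HX0]; split; auto; exists X0; auto.
Qed.

Lemma maxFilter_disjoint_all (eta : mset C -> Prop) (X0 : mset C) (Ys : list (mset C)) :
  maxFilter eta -> eta X0 -> (forall Y, In Y Ys -> J Y /\ ~ eta Y) ->
  exists X, eta X /\ (forall x, X x -> X0 x) /\
    (forall Y x, In Y Ys -> X x -> Y x -> False).
Proof.
  intros Hmax HX0; induction Ys as [|Y Ys IH]; intros HYs.
  - exists X0; split; [|split]; auto; intros Y x [].
  - destruct IH as [X [HX [HXX0 HXYs]]]; [intros Y' HY'; apply HYs; right; auto|].
    destruct (HYs Y (or_introl eq_refl)) as [HY HnY].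
    destruct (maxFilter_disjoint Hmax HY HnY) as [XY [HXY HXYY]].
    exists (fun x => X x /\ XY x); split; [|split].
    + apply (isFilter_inter (proj1 Hmax)); auto.
    + intros x [Hx _]; auto.
    + intros Y' x [<-|HY'] [Hx HxY]; eauto.
Qed.

Lemma tight_mem_cover (xi : mset C -> Prop) (X Y : mset C) (Ls : list (mset C)) :
  tight xi -> xi X -> dense_in Y X -> (forall L, In L Ls -> J L) ->
  (forall x, X x -> Y x -> exists L, In L Ls /\ L x) ->
  exists L, In L Ls /\ xi L.
Proof.
  intros [_ Htight] HX Hdense HLs Hcover; apply NNPP; intro Hnone.
  destruct (Htight (X :: nil) Ls) as [eta [Hmax [HetaX HetaLs]]].
  - intros X' [<-|[]]; exact HX.
  - intros L HL; split; auto; intro HxiL; apply Hnone; exists L; auto.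
  - destruct (maxFilter_disjoint_all (Ys := Ls) Hmax (HetaX X (or_introl eq_refl)))
      as [Z [HZ [HZX HZLs]]]; [intros L HL; split; auto|].
    destruct (Hdense Z) as [z [Hz HYz]].
    + apply (isFilter_J (proj1 Hmax)); auto.
    + exact HZX.
    + apply (isFilter_nonempty (proj1 Hmax)); auto.
    + destruct (Hcover z (HZX z Hz) HYz) as [L [HL HLz]]; exact (HZLs L z HL Hz HLz).
Qed.

Section Cover.
Variables (a b : Mor C) (gs : list (Mor C)).
Hypothesis Hgs : forall x, (Lam a x /\ Lam b x) <-> exists g, In g gs /\ Lam g x.
Hypothesis Hdense : dense_in (Lam b) (Lam a).

Lemma D_Lam_cover (xi : mset C -> Prop) :
  D (Lam a) xi <-> exists g, In g gs /\ D (Lam g) xi.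
Proof.
  split.
  - intros [Hxi Hxia].
    destruct (tight_mem_cover (Ls := map Lam gs) Hxi Hxia Hdense)
      as [L [HL HxiL]].
    + intros L HL; apply in_map_iff in HL as [g [<- _]]; apply J_Lam.
    + intros x Hax Hbx; destruct (proj1 (Hgs x) (conj Hax Hbx)) as [g [Hg Hgx]].
      exists (Lam g); split; auto; apply in_map; auto.
    + apply in_map_iff in HL as [g [<- Hg]]; exists g; split; [|split]; auto.
  - intros [g [Hg [Hxi Hxig]]]; split; auto.
    apply (isFilter_up (proj1 Hxi)) with (Lam g); auto; [apply J_Lam|].
    intros x Hgx; apply Hgs; eauto.
Qed.

Lemma Lam_meets_cover (c : Mor C) :
  (exists x, Lam c x /\ Lam a x) -> exists g, In g gs /\ exists x, Lam c x /\ Lam g x.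
Proof.
  intro Hca.
  destruct (Hdense (Z := fun x => Lam c x /\ Lam a x)) as [y [[Hcy Hay] Hby]].
  - apply J_inter; apply J_Lam.
  - intros x [_ Hax]; exact Hax.
  - exact Hca.
  - destruct (proj1 (Hgs y) (conj Hay Hby)) as [g [Hg Hgy]]; eauto.
Qed.

End Cover.

End Constructible.

Section Shift.
Variables (C : LCSC) (a b : Mor C).
Hypothesis Hs : src C a = src C b.

Local Notation t := (compR (morR a) (invR (morR b))).

Lemma shift_graph (x y : Mor C) :
  t x y <-> exists w, rng C w = src C b /\ x = comp C b w /\ y = comp C a w.
Proof.
  unfold compR, invR, morR; split.
  - intros [w [[Hw Hx] [_ Hy]]]; exists w; auto.
  - intros [w [Hw [Hx Hy]]]; exists w; rewrite Hs; auto.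
Qed.

Lemma shift_inj (w w' : Mor C) :
  rng C w = src C b -> rng C w' = src C b -> comp C a w = comp C a w' -> w = w'.
Proof. rewrite <- Hs; intros Hw Hw'; apply left_cancel; auto. Qed.

Lemma invR_shift_shift : eqR (compR (invR t) t) (idR (Lam b)).
Proof.
  intros x z; unfold compR at 1, invR at 1, idR; split.
  - intros [y [Hxy Hzy]]; apply shift_graph in Hxy as [w [Hw [-> ->]]];
      apply shift_graph in Hzy as [w' [Hw' [-> Hww']]].
    rewrite (shift_inj Hw' Hw (eq_sym Hww')); split; [exists w|]; auto.
  - intros [[w [Hw ->]] <-]; exists (comp C a w); split; apply shift_graph; eauto.
Qed.

Lemma J_shift_preimage (X : mset C) :
  inS t -> J X -> J (fun x => exists w, rng C w = src C b /\ x = comp C b w /\ X (comp C a w)).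
Proof.
  intros Ht HX; apply (inS_ext (inS_comp (inS_inv Ht) (inS_comp HX Ht))).
  intros x z; unfold compR at 1 2, invR at 1, idR; split.
  - intros [y [[y' [Hxy' [HXy' <-]]] Hzy]].
    apply shift_graph in Hxy' as [w [Hw [-> ->]]];
      apply shift_graph in Hzy as [w' [Hw' [-> Hww']]].
    rewrite (shift_inj Hw' Hw (eq_sym Hww')); split; [exists w|]; auto.
  - intros [[w [Hw [-> HXw]]] <-]; exists (comp C a w); split.
    + exists (comp C a w); split; [apply shift_graph; eauto|auto].
    + apply shift_graph; eauto.
Qed.

Hypothesis Hiso : Iso t.

Lemma Iso_shift_image_meets (X : mset C) :
  J X -> (forall x, X x -> Lam b x) -> (exists x, X x) ->
  exists w, rng C w = src C b /\ X (comp C b w) /\ X (comp C a w).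
Proof.
  intros HX HXb [x0 Hx0]; apply NNPP; intro Hnone.
  apply (proj2 Hiso (idR X)).
  - apply idR_isIdem; exact HX.
  - intro Hzero; exact (Hzero x0 x0 (conj Hx0 eq_refl)).
  - exact (idR_leR invR_shift_shift HXb).
  - intros x z [y [[Hx <-] [y' [Hty'x [y'' [[Hy' <-] _]]]]]].
    apply shift_graph in Hty'x as [w [Hw [-> ->]]]; eauto.
Qed.

Lemma Lam_a_dense_in_Lam_b : dense_in (Lam a) (Lam b).
Proof.
  intros X HX HXb HXne.
  destruct (Iso_shift_image_meets HX HXb HXne) as [w [Hw [_ HXaw]]].
  exists (comp C a w); split; auto; exists w; rewrite Hs; auto.
Qed.

Lemma Lam_b_dense_in_Lam_a : dense_in (Lam b) (Lam a).
Proof.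
  intros X HX HXa [x0 Hx0].
  destruct (Iso_shift_image_meets (X := fun x => exists w,
              rng C w = src C b /\ x = comp C b w /\ X (comp C a w)))
    as [w [Hw [[w1 [Hw1 [Hbw HXw1]]] [w2 [Hw2 [Haw _]]]]]].
  - exact (J_shift_preimage (proj1 Hiso) HX).
  - intros x [w [Hw [-> _]]]; exists w; auto.
  - destruct (HXa x0 Hx0) as [w [Hw ->]]; exists (comp C b w), w; rewrite <- Hs; auto.
  - assert (w1 = w) as -> by (symmetry; apply (left_cancel C b); congruence).
    exists (comp C a w); split; auto; exists w2; auto.
Qed.

End Shift.

Theorem lemma4p4 (C : LCSC) (Hfa : finitely_aligned C)
  (a b : Mor C) (gs : list (Mor C))
  (Hs : src C a = src C b)
  (Hiso : Iso (compR (morR a) (invR (morR b))))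
  (Hg : forall x, (Lam a x /\ Lam b x) <-> exists g, In g gs /\ Lam g x) :
  (forall xi, D (Lam a) xi <-> D (Lam b) xi) /\
  (forall xi, D (Lam a) xi <-> exists g, In g gs /\ D (Lam g) xi) /\
  (forall c : Mor C,
     ((exists x, Lam c x /\ Lam a x) \/ (exists x, Lam c x /\ Lam b x)) ->
     exists g, In g gs /\ exists x, Lam c x /\ Lam g x).
Proof.
  (* Finite alignment only guarantees that a list like gs exists; Hg provides it. *)
  assert (Hg' : forall x, (Lam b x /\ Lam a x) <-> exists g, In g gs /\ Lam g x).
  { intro x; rewrite <- Hg; tauto. }
  pose proof (Lam_b_dense_in_Lam_a Hs Hiso) as Hba.
  pose proof (Lam_a_dense_in_Lam_b Hs Hiso) as Hab.
  split; [|split].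
  - intro xi; rewrite (D_Lam_cover Hg Hba), (D_Lam_cover Hg' Hab); reflexivity.
  - exact (D_Lam_cover Hg Hba).
  - intros c [Hca|Hcb].
    + exact (Lam_meets_cover Hg Hba Hca).
    + exact (Lam_meets_cover Hg' Hab Hcb).
Qed.
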